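(* Let $l_H(s)$, $s\in\mathcal S$, be the codeword lengths of a Huffman code for $p$, $L_H=\sum_s p(s)l_H(s)$, and $l^{\max}_H=\max_s l_H(s)$. Then there exists an sAEDS with $N=2^{l^{\max}_H}$ states (with $N_s=2^{l^{\max}_H-l_H(s)}$) in which $l(E_{\hat x}(s))=l_H(s)$ for every $\hat x\in\mathcal X$ and $s\in\mathcal S$; consequently its average code length equals $L_H$ for every stationary distribution $Q$. In particular the optimal sAEDS with $2^{l^{\max}_H}$ states has average code length at most $L_H$.
   Context: Let $\mathcal S$ be a finite alphabet with $|\mathcal S|\ge 2$ and $p=\{p(s)\}$ a probability distribution with $p(s)>0$ for all $s$ (i.i.d. source). $\mathcal B=\{0,1\}^*$ (including the empty word), $l(\beta)$ the word length, $\lg=\log_2$. An AEDS with finite state set $\mathcal X$, $|\mathcal X|=N$, consists of maps $E_{\hat x}:\mathcal S\to\mathcal B$ and $F^-_{\hat x}:\mathcal S\to\mathcal X$ ($\hat x\in\mathcal X$) such that for every $x\in\mathcal X$ the words $E_{\hat x}(s)$ over all pairs $(\hat x,s)$ with $F^-_{\hat x}(s)=x$ are pairwise distinct and form a prefix-free set. The state chain is the Markov chain on $\mathcal X$ moving from $\hat x$ to $F^-_{\hat x}(s)$ with probability $p(s)$; for a stationary distribution $Q$ the average code length is $L=\sum_{\hat x}\sum_s p(s)Q(\hat x)l(E_{\hat x}(s))$. A state-divided AEDS (sAEDS) is an AEDS for which the sets $\mathcal X_s=\{F^-_{\hat x}(s):\hat x\in\mathcal X\}$, $s\in\mathcal S$,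 are pairwise disjoint with union $\mathcal X$; $N_s=|\mathcal X_s|$. For $x\in\mathcal X_s$, $\mathcal F^+_x=\{\hat x: F^-_{\hat x}(s)=x\}$; for each $s$ these sets partition $\mathcal X$. The optimal sAEDS with $N$ states is one minimizing $L$ among sAEDSs with $N$ states. *)

From mathcomp Require Import all_boot all_order all_algebra.
Set Implicit Arguments. Unset Strict Implicit. Unset Printing Implicit Defensive.
Import Order.TTheory GRing.Theory Num.Theory.
Local Open Scope ring_scope.

(* Huffman codeword lengths, positionally: [huffman ws ls] holds when ls is the
   list of codeword lengths of some Huffman code (any tie-breaking) for the
   weights ws. *)
Inductive huffman (R : realFieldType) : seq R -> seq nat -> Prop :=
| huff_two (a b : R) : huffman [:: a; b] [:: 1%N; 1%N]
| huff_merge (a b : R) (ws : seq R) (l : nat) (ls : seq nat) :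
    all (fun w => (a <= w) && (b <= w)) ws ->
    huffman (a + b :: ws) (l :: ls) ->
    huffman [:: a, b & ws] [:: l.+1, l.+1 & ls]
| huff_perm (ws ws' : seq R) (ls ls' : seq nat) :
    huffman ws ls -> size ws' = size ls' ->
    perm_eq (zip ws ls) (zip ws' ls') -> huffman ws' ls'.

Definition is_AEDS (S X : finType) (E : X -> S -> seq bool) (F : X -> S -> X) : Prop :=
  forall (x : X) (a b : X * S),
    F a.1 a.2 = x -> F b.1 b.2 = x -> a <> b -> ~~ prefix (E a.1 a.2) (E b.1 b.2).

Definition Xset (S X : finType) (F : X -> S -> X) (s : S) : {set X} :=
  [set F xh s | xh : X].

Definition is_sAEDS (S X : finType) (E : X -> S -> seq bool) (F : X -> S -> X) : Prop :=
  [/\ is_AEDS E F,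
      (forall s1 s2 : S, s1 != s2 -> [disjoint Xset F s1 & Xset F s2]) &
      \bigcup_(s : S) Xset F s = [set: X]].

Definition stationary (R : realFieldType) (S X : finType) (p : S -> R)
    (F : X -> S -> X) (Q : X -> R) : Prop :=
  [/\ forall x, 0 <= Q x,
      \sum_(x : X) Q x = 1 &
      forall x, Q x = \sum_(xh : X) \sum_(s : S | F xh s == x) Q xh * p s].

Definition avg_len (R : realFieldType) (S X : finType) (p : S -> R)
    (E : X -> S -> seq bool) (Q : X -> R) : R :=
  \sum_(xh : X) \sum_(s : S) p s * Q xh * (size (E xh s))%:R.

Definition optimal_sAEDS (R : realFieldType) (S : finType) (p : S -> R) (N : nat)
    (X : finType) (E : X -> S -> seq bool) (F : X -> S -> X) (Q : X -> R) : Prop :=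
  [/\ is_sAEDS E F, #|X| = N, stationary p F Q &
      forall (X' : finType) (E' : X' -> S -> seq bool) (F' : X' -> S -> X') (Q' : X' -> R),
        is_sAEDS E' F' -> #|X'| = N -> stationary p F' Q' ->
        avg_len p E Q <= avg_len p E' Q'].

(* A Huffman code is a complete prefix code, since splitting a codeword c into
   c0 and c1 preserves completeness.  Given such a code c with maximal length L,
   let the states be the binary words of length L; encoding s shifts c(s) into
   the front of the state and emits the size c(s) bits pushed out at the back.
   A state begins with exactly one codeword, which determines the last symbol,
   so the sets X_s = {x | c(s) is a prefix of x} partition the states and have
   2^(L - l(s)) elements, and the words emitted into one state have one length
   and are distinct, hence prefix-free.  Every emitted word for s has length
   l(s), so the average length is L_H for every stationary distribution.  One
   exists: the probability q(x) that the code stream of the source begins with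
   x; it satisfies q(x) = q(x0) + q(x1), whence the total mass of the states
   extending a word y is q(y). *)

From mathcomp Require Import all_boot all_order all_algebra.
From mathcomp Require Import zify.
Import Order.TTheory GRing.Theory Num.Theory.
Set Implicit Arguments. Unset Strict Implicit. Unset Printing Implicit Defensive.
Local Open Scope ring_scope.

Section Prefix.
Variable T : eqType.
Implicit Types (u v w : seq T) (x : T).

Definition prefix_comparable u v := prefix u v || prefix v u.

Lemma prefix_comparableC u v : prefix_comparable u v = prefix_comparable v u.
Proof. by rewrite /prefix_comparable orbC. Qed.

Lemma prefix_eq_size u v : size u = size v -> prefix u v -> u = v.
Proof. by move=> uv; rewrite prefixE uv take_size => /eqP. Qed.

Lemma prefix_comparable_prefix u v w :
  prefix u w -> prefix v w -> prefix_comparable u v.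
Proof.
rewrite /prefix_comparable => /prefixP[a ->] /prefixP[b].
case: (leqP (size u) (size v)) => [|/ltnW] uv e.
  by rewrite prefixE -(takel_cat b uv) -e take_size_cat ?eqxx.
by rewrite [prefix v u]prefixE -(takel_cat a uv) e take_size_cat ?eqxx ?orbT.
Qed.

Lemma prefixs_rcons u v x : prefix u (rcons v x) = prefix u v || (u == rcons v x).
Proof. by elim: v u => [|y v IH] [|z u] //=; rewrite IH eqseq_cons andb_orr. Qed.

Lemma prefix_comparable_rconsl u v x :
  prefix_comparable (rcons u x) v -> prefix_comparable u v.
Proof.
rewrite /prefix_comparable prefixs_rcons => /orP[|/orP[|/eqP->]].
- by rewrite -cats1 => /catl_prefix ->.
- by move=> ->; rewrite orbT.
- by rewrite prefix_rcons.
Qed.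

Lemma prefix_rconsE x0 u v x : (size u < size v)%N ->
  prefix (rcons u x) v = prefix u v && (nth x0 v (size u) == x).
Proof. by move=> uv; rewrite !prefixE size_rcons (take_nth x0 uv) eqseq_rcons. Qed.

End Prefix.

Lemma perm_pairwise (T : eqType) (r : rel T) (s1 s2 : seq T) :
  symmetric r -> perm_eq s1 s2 -> pairwise r s1 = pairwise r s2.
Proof.
move=> rC; elim: s1 s2 => [|x s1 IH] s2 pe.
  by move: pe; rewrite perm_sym => /perm_nilP ->.
have : x \in s2 by rewrite -(perm_mem pe) mem_head.
move: pe => /[swap] /splitPr[a b].
rewrite perm_sym -[x :: b]cat1s perm_catCA perm_sym perm_cons => pe.
rewrite pairwise_cons (IH _ pe) (perm_all _ pe) !pairwise_cat pairwise_cons /=.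
rewrite allrel_consr all_cat (eq_all (a2 := r^~ x)) => [|y]; last exact: rC.
by rewrite allrel1l -!andbA; case: (all (r x) b); rewrite /= ?andbF.
Qed.

Lemma pairwise_neq (T : eqType) (r : rel T) (s : seq T) :
  symmetric r -> pairwise r s -> {in s &, forall x y, x != y -> r x y}.
Proof.
move=> rC; elim: s => [|z s IH] //; rewrite pairwise_cons => /andP[/allP rz /IH {}IH].
move=> x y; rewrite !inE => /predU1P[->|xs] /predU1P[->|ys]; rewrite ?eqxx //.
- by move=> _; apply: rz.
- by move=> _; rewrite rC; apply: rz.
- exact: IH.
Qed.

(* Completeness in the sense that every word is comparable with a codeword,
   i.e. Kraft's sum is 1. *)
Definition complete_prefix_code (cs : seq (seq bool)) :=
  pairwise (fun u v => ~~ prefix_comparable u v) cs /\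
  forall w, has (prefix_comparable w) cs.

Lemma complete_prefix_code_pair : complete_prefix_code [:: [:: false]; [:: true]].
Proof.
split=> // -[|b w] //=.
by case: b; rewrite /prefix_comparable /= prefix0s ?orbT.
Qed.

Lemma complete_prefix_code_perm cs1 cs2 :
  perm_eq cs1 cs2 -> complete_prefix_code cs1 -> complete_prefix_code cs2.
Proof.
move=> pe [pf cmp]; split; last by move=> w; rewrite -(perm_has _ pe).
by rewrite -(perm_pairwise _ pe) // => u v; rewrite prefix_comparableC.
Qed.

Lemma complete_prefix_code_split c cs :
  complete_prefix_code (c :: cs) ->
  complete_prefix_code [:: rcons c false, rcons c true & cs].
Proof.
move=> [/= /andP[/allP cfree pf] cmp]; split.
  have rfree b : all (fun v => ~~ prefix_comparable (rcons c b) v) cs.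
    by apply/allP=> v /cfree; apply: contra; apply: prefix_comparable_rconsl.
  have rcons_incomparable : ~~ prefix_comparable (rcons c false) (rcons c true).
    by apply/negP=> /orP[] /prefix_eq_size;
      rewrite !size_rcons => /(_ erefl) /eqP; rewrite eqseq_rcons andbF.
  rewrite [pairwise _ _]pairwise_cons [pairwise _ (_ :: _)]pairwise_cons /=.
  by rewrite !rfree pf rcons_incomparable.
move=> w; have /orP[wc|wcs] := cmp w; last by rewrite /= wcs !orbT.
rewrite /= /prefix_comparable; case/orP: wc => [/prefix_trans wc|/prefixP[[|b t] ->]].
- by rewrite wc ?prefix_rcons.
- by rewrite cats0 prefix_rcons.
- by case: b; rewrite -cat_rcons prefix_prefix ?orbT.
Qed.

Lemma perm_map_lift (T1 T2 : eqType) (f : T1 -> T2) (s : seq T1) (t : seq T2) :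
  perm_eq (map f s) t -> exists2 s', perm_eq s s' & map f s' = t.
Proof.
case: s => [|x0 s] pe.
  by exists [::]; move: pe; rewrite // perm_sym => /perm_nilP ->.
rewrite perm_sym in pe; case/(perm_iotaP (f x0)): pe => Is; rewrite size_map => IsP ->.
exists (map (nth x0 (x0 :: s)) Is); first by rewrite perm_sym; apply/(perm_iotaP x0); exists Is.
rewrite -map_comp; apply/eq_in_map => i; rewrite (perm_mem IsP) mem_iota /= => lt_i.
by rewrite -[f x0 :: _]/(map f (x0 :: s)) (nth_map x0).
Qed.

Lemma size_huffman (R : realFieldType) (ws : seq R) (ls : seq nat) :
  huffman ws ls -> size ws = size ls.
Proof. by elim=> [|a b ws' l ls' _ _ /= [->]|ws' ws'' ls' ls'' _ _ ->]. Qed.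

Lemma huffman_complete_prefix_code (R : realFieldType) (ws : seq R) (ls : seq nat) :
  huffman ws ls -> exists2 cs, map size cs = ls & complete_prefix_code cs.
Proof.
elim=> {ws ls} [a b | a b ws l ls _ _ [[|c cs] //= [<- <-] ok]
               | ws ws' ls ls' h [cs ecs ok] sz' pz].
- by exists [:: [:: false]; [:: true]]; last exact: complete_prefix_code_pair.
- exists [:: rcons c false, rcons c true & cs]; first by rewrite /= !size_rcons.
  exact: complete_prefix_code_split.
- have := perm_zip2 (size_huffman h) sz' pz; rewrite -ecs => /perm_map_lift[cs' pe <-].
  by exists cs'; last exact: complete_prefix_code_perm pe ok.
Qed.

Lemma huffman_prefix_code (R : realFieldType) (S : finType) (p : S -> R) (l : S -> nat) :
  huffman [seq p s | s <- enum S] [seq l s | s <- enum S] ->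
  exists c : S -> seq bool,
    [/\ forall s, size (c s) = l s,
        forall s t, prefix_comparable (c s) (c t) -> s = t &
        forall w, exists s, prefix_comparable w (c s)].
Proof.
case/huffman_complete_prefix_code=> cs ecs [pf cmp].
have [c /(_ (enum_uniq S))] := map_of_seq (enum S) cs [::].
rewrite -(size_map size cs) ecs size_map => /(_ erefl) csE.
exists c; split.
- move=> s; have : map (size \o c) (enum S) = map l (enum S) by rewrite map_comp csE.
  by move/eq_in_map; apply; rewrite mem_enum.
- move=> s t; apply: contraTeq => st.
  move: pf; rewrite -csE pairwise_map => /pairwise_neq; apply; rewrite ?mem_enum //.
  by move=> u v /=; rewrite prefix_comparableC.
- by move=> w; have := cmp w; rewrite -csE has_map => /hasP[s _]; exists s.
Qed.

Lemma sum_prefix_tuple (V : nmodType) (L : nat) (f : seq bool -> V) :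
  (forall y, (size y < L)%N -> f (rcons y false) + f (rcons y true) = f y) ->
  forall y, (size y <= L)%N -> \sum_(x : L.-tuple bool | prefix y x) f x = f y.
Proof.
move=> f_split y; move eq_k: (L - size y)%N => k; elim: k y eq_k => [|k IH] y eq_k yL.
  have /eqP sy : size y == L by rewrite eqn_leq yL -subn_eq0 eq_k.
  rewrite (eq_bigl (pred1 (Tuple (introT eqP sy)))) ?big_pred1_eq // => x /=.
  rewrite -val_eqE /= eq_sym; apply/idP/eqP=> [|->]; last exact: prefix_refl.
  by apply: prefix_eq_size; rewrite size_tuple.
have yL' : (size y < L)%N by rewrite -subn_gt0 eq_k.
have IHb b : \sum_(x : L.-tuple bool | prefix y x && (nth false x (size y) == b)) f x
             = f (rcons y b).
  rewrite -IH ?size_rcons //; last by rewrite subnS eq_k.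
  by apply: eq_bigl => x; rewrite (prefix_rconsE false) ?size_tuple.
rewrite (bigID (fun x : L.-tuple bool => nth false x (size y))) /= -f_split // addrC.
by rewrite -(IHb false) -(IHb true); congr (_ + _); apply: eq_bigl => x; case: nth.
Qed.

Lemma card_prefix_tuple (L : nat) (y : seq bool) :
  (size y <= L)%N -> #|[set x : L.-tuple bool | prefix y x]| = (2 ^ (L - size y))%N.
Proof.
move=> yL; rewrite -(@sum_prefix_tuple nat L (fun w => 2 ^ (L - size w))%N _ y yL).
  rewrite -sum1_card; apply: eq_big => [x|x _]; first by rewrite inE.
  by rewrite size_tuple subnn.
move=> w wL; rewrite !size_rcons; have -> : (L - size w = (L - (size w).+1).+1)%N by lia.
by rewrite expnS mul2n -addnn.
Qed.

Lemma prefix_rcons_split (u v : seq bool) : u != v ->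
  (prefix (rcons u false) v + prefix (rcons u true) v)%N = prefix u v.
Proof.
move=> neq_uv; case: (ltnP (size u) (size v)) => [lt_uv|le_vu].
  by rewrite !(prefix_rconsE false) //; case: prefix; case: nth.
have too_long w : (size v < size w)%N -> prefix w v = false.
  by move=> lt_vw; apply: contraTF lt_vw => /size_prefix; rewrite leqNgt.
rewrite !(too_long (rcons u _)) ?size_rcons ?ltnS //; suff -> : prefix u v = false by [].
apply: contraNF neq_uv => uv.
by apply/eqP/(prefix_eq_size _ uv)/eqP; rewrite eqn_leq size_prefix.
Qed.

Section PrefixProbability.
Variables (R : realFieldType) (S : finType) (p : S -> R) (c : S -> seq bool).
Hypothesis p_ge0 : forall s, 0 <= p s.
Hypothesis p_sum1 : \sum_(s : S) p s = 1.
Hypothesis c_nonempty : forall s, c s != [::].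

Definition parse_step (f : seq bool -> R) (w : seq bool) : R :=
  \sum_(s : S) p s *
    (if prefix (c s) w then f (drop (size (c s)) w) else (prefix w (c s))%:R).

Fixpoint prefix_prob_fuel (n : nat) (w : seq bool) : R :=
  if n is n'.+1 then (if w is [::] then 1 else parse_step (prefix_prob_fuel n') w)
  else 1.

(* The probability that the code stream of the i.i.d. source starts with w.
   Each parsing step consumes a nonempty codeword, so size w steps of fuel
   suffice. *)
Definition prefix_prob (w : seq bool) : R := prefix_prob_fuel (size w) w.

Lemma size_drop_code s (w : seq bool) :
  w != [::] -> (size (drop (size (c s)) w) < size w)%N.
Proof. by move=> nz_w; rewrite size_drop ltn_subrL !lt0n !size_eq0 c_nonempty nz_w. Qed.

Lemma prefix_prob_fuel_eq n m w :
  (size w <= n)%N -> (size w <= m)%N -> prefix_prob_fuel n w = prefix_prob_fuel m w.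
Proof.
elim: n m w => [|n IH] [|m] [|b w] //= le_wn le_wm; apply: eq_bigr => s _.
case: ifP => // _; congr (_ * _); have := size_drop_code s (isT : b :: w != [::]).
by move=> lt_drop; apply: IH; rewrite -ltnS (leq_trans lt_drop).
Qed.

Lemma prefix_probE w : prefix_prob w = parse_step prefix_prob w.
Proof.
case: w => [|b w].
  rewrite /parse_step -[LHS]p_sum1; apply: eq_bigr => s _.
  by rewrite prefixs0 (negbTE (c_nonempty s)) prefix0s mulr1.
apply: eq_bigr => s _; case: ifP => // _; congr (_ * _).
have lt_drop := size_drop_code s (isT : b :: w != [::]).
by apply: prefix_prob_fuel_eq; rewrite // -ltnS.
Qed.

Lemma prefix_prob_ge0 w : 0 <= prefix_prob w.
Proof.
rewrite /prefix_prob; move: (size w) => n; elim: n w => [|n IH] [|b w] //=.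
apply: sumr_ge0 => s _; apply: mulr_ge0 => //; case: ifP => // _; exact: ler0n.
Qed.

Lemma prefix_prob_split y :
  prefix_prob (rcons y false) + prefix_prob (rcons y true) = prefix_prob y.
Proof.
have [n] := ubnP (size y); elim: n y => // n IH y; rewrite ltnS => le_yn.
rewrite [RHS]prefix_probE !prefix_probE -big_split; apply: eq_bigr => s _ /=.
rewrite -mulrDr; congr (_ * _); have [cy|ncy] := boolP (prefix (c s) y).
  have le_cy := size_prefix cy.
  rewrite !(prefix_trans cy (prefix_rcons _ _)) !drop_rcons // IH //.
  apply: leq_trans le_yn; apply: size_drop_code; apply: contraTneq cy => ->.
  by rewrite prefixs0 c_nonempty.
have branch_rcons b :
    (if prefix (c s) (rcons y b) then prefix_prob (drop (size (c s)) (rcons y b))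
     else (prefix (rcons y b) (c s))%:R) = (prefix (rcons y b) (c s))%:R.
  rewrite prefixs_rcons (negbTE ncy) /=; case: eqP => // ->.
  by rewrite drop_size prefix_refl.
rewrite !branch_rcons -natrD prefix_rcons_split //.
by apply/eqP=> eq_y; rewrite eq_y prefix_refl in ncy.
Qed.

End PrefixProbability.

Section CodeShift.
Variables (S : finType) (c : S -> seq bool) (L : nat).
Hypothesis c_prefix_free : forall s t, prefix_comparable (c s) (c t) -> s = t.
Hypothesis c_complete : forall w, exists s, prefix_comparable w (c s).
Hypothesis size_c_le : forall s, (size (c s) <= L)%N.

Definition code_shift (xh : L.-tuple bool) (s : S) : L.-tuple bool :=
  insubd xh (c s ++ take (L - size (c s)) xh).

Definition code_emit (xh : L.-tuple bool) (s : S) : seq bool :=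
  drop (L - size (c s)) xh.

Lemma code_shiftE xh s : val (code_shift xh s) = c s ++ take (L - size (c s)) xh.
Proof.
rewrite insubdK // -topredE /= size_cat size_takel ?size_tuple ?leq_subr //.
by rewrite subnKC.
Qed.

Lemma prefix_code_shift xh s : prefix (c s) (code_shift xh s).
Proof. by rewrite code_shiftE prefix_prefix. Qed.

Lemma size_code_emit xh s : size (code_emit xh s) = size (c s).
Proof. by rewrite size_drop size_tuple subKn. Qed.

Lemma code_prefix_unique s t w : prefix (c s) w -> prefix (c t) w -> s = t.
Proof. by move=> st tw; apply: c_prefix_free; apply: prefix_comparable_prefix st tw. Qed.

Lemma tuple_prefix_code s (x : L.-tuple bool) : prefix x (c s) -> c s = x.
Proof.
move=> xs; apply: esym (prefix_eq_size _ xs); apply/eqP.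
by rewrite eqn_leq size_prefix // size_tuple size_c_le.
Qed.

Lemma code_prefix_tuple (x : L.-tuple bool) : exists s, prefix (c s) x.
Proof.
have [s /orP[/tuple_prefix_code xs|]] := c_complete x; last by exists s.
by exists s; rewrite xs prefix_refl.
Qed.

Lemma Xset_code_shift s : Xset code_shift s = [set x : L.-tuple bool | prefix (c s) x].
Proof.
apply/setP=> x; rewrite !inE; apply/imsetP/idP=> [[xh _ ->]|/prefixP[t ext]].
  exact: prefix_code_shift.
have sz_t : size t = (L - size (c s))%N by rewrite -(size_tuple x) ext size_cat addKn.
have sz_xh : size (t ++ nseq (size (c s)) false) == L.
  by rewrite size_cat size_nseq sz_t subnK.
exists (insubd x (t ++ nseq (size (c s)) false)) => //; apply: val_inj.
by rewrite code_shiftE insubdK // take_size_cat.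
Qed.

Lemma card_Xset_code_shift s : #|Xset code_shift s| = (2 ^ (L - size (c s)))%N.
Proof. by rewrite Xset_code_shift card_prefix_tuple. Qed.

Lemma code_shift_AEDS : is_AEDS code_emit code_shift.
Proof.
move=> _ [xa sa] [xb sb] /= <- eq_shift neq_ab; apply/negP=> emit_ab; apply: neq_ab.
have eq_s : sa = sb.
  by apply: (code_prefix_unique (prefix_code_shift xa sa)); rewrite -eq_shift prefix_code_shift.
subst sb; set k := (L - size (c sa))%N.
have eq_take : take k xa = take k xb.
  move/(congr1 val): eq_shift; rewrite !code_shiftE => /eqP.
  by rewrite eqseq_cat // => /andP[_ /eqP].
have eq_drop : drop k xa = drop k xb.
  by apply: prefix_eq_size emit_ab; rewrite !size_code_emit.
by congr (_, _); apply: val_inj; rewrite /= -(cat_take_drop k xa) eq_take eq_drop cat_take_drop.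
Qed.

Lemma code_shift_sAEDS : is_sAEDS code_emit code_shift.
Proof.
split; first exact: code_shift_AEDS.
- move=> s t neq_st; rewrite !Xset_code_shift -setI_eq0; apply/eqP/setP=> x.
  rewrite !inE; apply/negP=> /andP[sx tx].
  by move/eqP: neq_st; apply; apply: code_prefix_unique sx tx.
- apply/setP=> x; rewrite inE; apply/bigcupP.
  by have [s sx] := code_prefix_tuple x; exists s; rewrite // Xset_code_shift inE.
Qed.

Section Stationary.
Variables (R : realFieldType) (p : S -> R).
Hypothesis p_ge0 : forall s, 0 <= p s.
Hypothesis p_sum1 : \sum_(s : S) p s = 1.
Hypothesis c_nonempty : forall s, c s != [::].

Lemma prefix_prob_code_tuple s (x : L.-tuple bool) : prefix (c s) x ->
  prefix_prob p c x = p s * prefix_prob p c (drop (size (c s)) x).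
Proof.
move=> sx; rewrite prefix_probE // /parse_step (bigD1 s) //= sx big1 ?addr0 // => t neq_ts.
have tx : prefix (c t) x = false.
  by apply: contraNF neq_ts => tx; rewrite (code_prefix_unique tx sx).
have xt : prefix x (c t) = false.
  by apply: contraFF tx => /tuple_prefix_code ->; apply: prefix_refl.
by rewrite tx xt mulr0.
Qed.

Lemma code_shift_eq xh t s (x : L.-tuple bool) : prefix (c s) x ->
  (code_shift xh t == x) = (t == s) && prefix (drop (size (c s)) x) xh.
Proof.
move=> sx; have sz_drop : size (drop (size (c s)) x) = (L - size (c s))%N.
  by rewrite size_drop size_tuple.
apply/eqP/andP => [eq_x|[/eqP -> dx]].
  have eq_ts : t = s.
    by apply: code_prefix_unique sx; rewrite -eq_x prefix_code_shift.
  subst t; split=> //; rewrite prefixE sz_drop -eq_x code_shiftE drop_size_cat //.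
apply: val_inj; rewrite code_shiftE -sz_drop; move: dx; rewrite prefixE => /eqP ->.
by move: sx; rewrite prefixE => /eqP {1}<-; rewrite cat_take_drop.
Qed.

Lemma code_shift_stationary : stationary p code_shift (fun x => prefix_prob p c x).
Proof.
have sum_prob y : (size y <= L)%N ->
    \sum_(x : L.-tuple bool | prefix y x) prefix_prob p c x = prefix_prob p c y.
  by apply: sum_prefix_tuple => {}y _; apply: prefix_prob_split.
split=> [x|| x]; first exact: prefix_prob_ge0.
  rewrite -[RHS]/(prefix_prob p c [::]) -sum_prob //.
  by apply: eq_bigl => x; rewrite prefix0s.
have [s sx] := code_prefix_tuple x; rewrite (prefix_prob_code_tuple sx).
have inner xh : \sum_(t | code_shift xh t == x) prefix_prob p c xh * p t
    = if prefix (drop (size (c s)) x) xh then prefix_prob p c xh * p s else 0.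
  rewrite (eq_bigl (fun t => (t == s) && prefix (drop (size (c s)) x) xh)).
    by rewrite big_andbC; case: ifP => _; [rewrite big_pred1_eq | rewrite big_pred0].
  by move=> t; apply: code_shift_eq.
rewrite (eq_bigr _ (fun xh _ => inner xh)) -big_mkcond -mulr_suml mulrC.
by rewrite sum_prob // size_drop size_tuple leq_subr.
Qed.

End Stationary.
End CodeShift.

Lemma code_nonempty (S : finType) (c : S -> seq bool) :
  (1 < #|S|)%N -> (forall s t, prefix_comparable (c s) (c t) -> s = t) ->
  forall s, c s != [::].
Proof.
move=> S2 c_free s; have /card_gt0P[t] : (0 < #|predC1 s|)%N by rewrite cardC1; lia.
rewrite !inE => neq_ts; apply/eqP=> cs0; move/eqP: neq_ts; apply.
by apply: c_free; rewrite cs0 /prefix_comparable prefix0s orbT.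
Qed.

Lemma avg_len_const_size (R : realFieldType) (S X : finType) (p : S -> R)
    (l : S -> nat) (E : X -> S -> seq bool) (F : X -> S -> X) (Q : X -> R) :
  (forall xh s, size (E xh s) = l s) -> stationary p F Q ->
  avg_len p E Q = \sum_(s : S) p s * (l s)%:R.
Proof.
move=> size_E [_ Q_sum1 _]; rewrite /avg_len exchange_big; apply: eq_bigr => s _.
by under eq_bigr do rewrite size_E mulrAC; rewrite -mulr_sumr Q_sum1 mulr1.
Qed.

Theorem theorem3 (R : realFieldType) (S : finType) (p : S -> R) (lH : S -> nat) :
  (2 <= #|S|)%N ->
  (forall s, 0 < p s) ->
  \sum_(s : S) p s = 1 ->
  huffman [seq p s | s <- enum S] [seq lH s | s <- enum S] ->
  let lmax := (\max_(s : S) lH s)%N in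
  let LH := \sum_(s : S) p s * (lH s)%:R in
  (exists (X : finType) (E : X -> S -> seq bool) (F : X -> S -> X),
      [/\ is_sAEDS E F,
          #|X| = (2 ^ lmax)%N,
          (forall s, #|Xset F s| = (2 ^ (lmax - lH s))%N),
          (forall xh s, size (E xh s) = lH s) &
          (forall Q : X -> R, stationary p F Q -> avg_len p E Q = LH)])
  /\ (forall (X : finType) (E : X -> S -> seq bool) (F : X -> S -> X) (Q : X -> R),
        optimal_sAEDS p (2 ^ lmax)%N E F Q -> avg_len p E Q <= LH).
Proof.
move=> S2 p_gt0 p_sum1 /huffman_prefix_code[c [size_c c_free c_complete]] lmax LH.
have size_c_le s : (size (c s) <= lmax)%N by rewrite size_c; apply: leq_bigmax.
have sAEDS := code_shift_sAEDS c_free c_complete size_c_le.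
have card_states : #|{: lmax.-tuple bool}| = (2 ^ lmax)%N by rewrite card_tuple card_bool.
have size_emit (xh : lmax.-tuple bool) s : size (code_emit c xh s) = lH s.
  by rewrite size_code_emit ?size_c.
have stat := code_shift_stationary c_free c_complete size_c_le
  (fun s => ltW (p_gt0 s)) p_sum1 (code_nonempty S2 c_free).
split.
  exists (lmax.-tuple bool), (code_emit c (L := lmax)), (code_shift c (L := lmax)); split=> //.
  - by move=> s; rewrite card_Xset_code_shift ?size_c.
  - by move=> Q; apply: avg_len_const_size.
move=> X E F Q [_ _ _ opt]; rewrite /LH -(avg_len_const_size size_emit stat).
exact: opt sAEDS card_states stat.
Qed.
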